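(* Let $T$ be a neutral tree on $n_1\geq 7$ vertices. Then the graph $T^{\dagger}$ (for any choice of pairing in its construction) is neutral.
   Context: All graphs are finite and simple. A leaf is a vertex of degree one. The leaf-connecting operation on a graph $G$ produces $G^{\dagger}$ as follows: (1) for each vertex $v$ of $G$, attach $d_v$ new pendant vertices (leaves) to $v$; (2) repeatedly join a pair of leaves by an edge until no leaf is left (so the new pendant vertices are paired up by a perfect matching). For a graph $G=(V,E)$ with $m=|E|\geq1$ and degrees $d_u$, the assortativity coefficient is $$r(G)=\frac{m^{-1}\sum_{e_{uv}\in E} d_{u}d_{v}-\Big[m^{-1}\sum_{e_{uv}\in E} \tfrac{1}{2}(d_{u}+d_{v})\Big]^{2}}{m^{-1}\sum_{e_{uv}\in E} \tfrac{1}{2}(d^{2}_{u}+d^{2}_{v})-\Big[m^{-1}\sum_{e_{uv}\in E} \tfrac{1}{2}(d_{u}+d_{v})\Big]^{2}},$$ sums over edges counting each edge once, defined whenever the denominator is nonzero; $G$ is neutral if $r(G)$ is defined and equals $0$. *)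

(* Values of the assortativity coefficient are computed in rat
   (all quantities involved are rational). *)
From mathcomp Require Import all_boot all_order all_algebra.
Set Implicit Arguments. Unset Strict Implicit. Unset Printing Implicit Defensive.
Import Order.TTheory GRing.Theory Num.Theory.

(* A finite simple graph is a symmetric irreflexive relation e on a finType. *)

Definition deg (T : finType) (e : rel T) (v : T) : nat := #|[set u | e v u]|.

Definition edges (T : finType) (e : rel T) : {set T * T} :=
  [set p : T * T | e p.1 p.2 && (enum_rank p.1 < enum_rank p.2)%N].

Definition nedges (T : finType) (e : rel T) : nat := #|edges e|.

Local Open Scope ring_scope.

Definition degQ (T : finType) (e : rel T) (v : T) : rat := (deg e v)%:R.

Definition edge_avg (T : finType) (e : rel T) (f : T -> T -> rat) : rat :=
  (nedges e)%:R^-1 * \sum_(p in edges e) f p.1 p.2.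

Definition assort_num (T : finType) (e : rel T) : rat :=
  edge_avg e (fun u v => degQ e u * degQ e v)
  - (edge_avg e (fun u v => (degQ e u + degQ e v) / 2%:R)) ^+ 2.

Definition assort_den (T : finType) (e : rel T) : rat :=
  edge_avg e (fun u v => (degQ e u ^+ 2 + degQ e v ^+ 2) / 2%:R)
  - (edge_avg e (fun u v => (degQ e u + degQ e v) / 2%:R)) ^+ 2.

Definition assortativity (T : finType) (e : rel T) : rat :=
  assort_num e / assort_den e.

(* G is neutral: r(G) is defined (m >= 1 and nonzero denominator) and r(G) = 0 *)
Definition neutral (T : finType) (e : rel T) : Prop :=
  (0 < nedges e)%N /\ assort_den e != 0 /\ assortativity e = 0.

Definition is_tree (T : finType) (e : rel T) : Prop :=
  (forall u v : T, connect e u v) /\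
  (forall s : seq T, uniq s -> (2 < size s)%N -> ~~ cycle e s).

(* The new pendant vertices: vertex v receives deg v pendants (v, i), i < deg v. *)
Definition pendant (T : finType) (e : rel T) : finType :=
  {v : T & 'I_(deg e v)}.

(* Leaf-connecting operation: given a pairing mu of the pendants
   (a fixed-point-free involution = perfect matching), the graph G^dagger
   on vertex set T + pendants. *)
Definition dagger (T : finType) (e : rel T) (mu : pendant e -> pendant e)
  : rel (T + pendant e)%type :=
  fun x y =>
    match x, y with
    | inl u, inl v => e u v
    | inl u, inr p => tag p == u
    | inr p, inl u => tag p == u
    | inr p, inr q => mu p == q
    end.

(* In G^dagger every old
   vertex has its degree doubled and each of the 2m new vertices has degree 2.
   Writing M_k for the k-th moment sum_u d_u^k (so M_1 = 2m) and P for the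
   sum of d_u d_v over ordered adjacent pairs, r(G) has numerator
   P/M_1 - (M_2/M_1)^2 and denominator M_3/M_1 - (M_2/M_1)^2.  For G^dagger
   these moments become M'_k = 2^k (M_k + M_1) and P' = 4P + 8M_2 + 4M_1,
   so the numerator is unchanged while the denominator grows by
   sum_u d_u (d_u - 1)^2 / M_1 >= 0.  The denominator of a graph is itself a
   weighted variance, hence nonnegative, so neutrality is preserved. *)
From mathcomp Require Import all_boot all_order all_algebra.
From mathcomp Require Import ring lra.
Set Implicit Arguments. Unset Strict Implicit. Unset Printing Implicit Defensive.
Import Order.TTheory GRing.Theory Num.Theory.
Local Open Scope ring_scope.

Definition arc_sum (T : finType) (e : rel T) (f : T -> T -> rat) : rat :=
  \sum_u \sum_(v | e u v) f u v.

Definition deg_moment (T : finType) (e : rel T) (k : nat) : rat :=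
  \sum_u degQ e u ^+ k.

Section DegreeMoments.
Variables (T : finType) (e : rel T).
Hypotheses (e_sym : symmetric e) (e_irr : irreflexive e).

Local Notation d := (degQ e).
Local Notation M := (deg_moment e).

Lemma degQE u : d u = \sum_(v | e u v) 1.
Proof.
by rewrite /degQ /deg -sum1_card natr_sum; apply: eq_bigl => v; rewrite inE.
Qed.

Lemma sum_deg_mul_exp k : \sum_u d u * d u ^+ k = M k.+1.
Proof. by apply: eq_bigr => u _; rewrite exprS. Qed.

Lemma sum_deg_sqr : \sum_u d u * d u = M 2.
Proof. by apply: eq_bigr => u _; rewrite expr2. Qed.

Lemma deg_moment_ge0 k : 0 <= M k.
Proof. by apply: sumr_ge0 => u _; rewrite exprn_ge0 ?ler0n. Qed.

Lemma arc_sum_edges (f : T -> T -> rat) :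
  (forall u v, f u v = f v u) ->
  arc_sum e f = 2 * \sum_(p in edges e) f p.1 p.2.
Proof.
move=> fsym; rewrite /arc_sum pair_big_dep /= mulr_natl mulr2n.
rewrite (bigID (fun p : T * T => enum_rank p.1 < enum_rank p.2)%N) /=.
congr (_ + _); first by apply: eq_bigl => p; rewrite inE.
rewrite (reindex_inj (h := fun p : T * T => (p.2, p.1))); last first.
  by move=> [a b] [c d] /= [-> ->].
apply: eq_big => [[a b]|[a b] _] /=; last by rewrite fsym.
rewrite inE /= e_sym; case: (boolP (e a b)) => //= eab.
rewrite -leqNgt ltn_neqAle; case: eqVneq => //= rab.
by move: eab; rewrite (enum_rank_inj (val_inj (esym rab))) e_irr.
Qed.

Lemma handshake : M 1 = 2 * (nedges e)%:R.
Proof.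
have := arc_sum_edges (fun _ _ => erefl : (1 : rat) = 1).
rewrite sumr_const /arc_sum /nedges mulr_natr => <-.
by apply: eq_bigr => u _; rewrite expr1 degQE.
Qed.

Lemma edge_avgE (f : T -> T -> rat) :
  (forall u v, f u v = f v u) -> edge_avg e f = arc_sum e f / M 1.
Proof.
move=> fsym; rewrite /edge_avg (arc_sum_edges fsym) handshake.
have [->|m0] := eqVneq ((nedges e)%:R : rat) 0; first by rewrite !(mulr0, invr0, mul0r).
by field.
Qed.

Lemma arc_sum_mean (g : T -> rat) :
  arc_sum e (fun u v => (g u + g v) / 2) = \sum_u d u * g u.
Proof.
transitivity ((arc_sum e (fun u _ => g u) + arc_sum e (fun _ v => g v)) / 2).
  by rewrite /arc_sum -big_split mulr_suml; apply: eq_bigr => u _;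
     rewrite -big_split mulr_suml.
have -> : arc_sum e (fun u _ => g u) = \sum_u d u * g u.
  by apply: eq_bigr => u _; rewrite degQE mulr_suml; apply: eq_bigr => v _; rewrite mul1r.
have -> : arc_sum e (fun _ v => g v) = \sum_u d u * g u.
  rewrite /arc_sum; under eq_bigr do rewrite big_mkcond /=.
  rewrite exchange_big /=; apply: eq_bigr => v _.
  rewrite degQE mulr_suml [RHS]big_mkcond; apply: eq_bigr => u _.
  by rewrite e_sym; case: (e v u); rewrite ?mul1r.
lra.
Qed.

Lemma assort_numE :
  assort_num e = arc_sum e (fun u v => d u * d v) / M 1 - (M 2 / M 1) ^+ 2.
Proof.
rewrite /assort_num !edge_avgE => [|u v|u v]; last 2 first.
- by rewrite addrC.
- by rewrite mulrC.
by rewrite arc_sum_mean sum_deg_sqr.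
Qed.

Lemma assort_denE : assort_den e = M 3 / M 1 - (M 2 / M 1) ^+ 2.
Proof.
rewrite /assort_den !edge_avgE => [|u v|u v]; try by rewrite addrC.
by rewrite !arc_sum_mean sum_deg_mul_exp sum_deg_sqr.
Qed.

Lemma sum_deg_sqr_dev (c : rat) :
  \sum_u d u * (d u - c) ^+ 2 = M 3 - 2 * c * M 2 + c ^+ 2 * M 1.
Proof.
rewrite /deg_moment !mulr_sumr -sumrB -big_split /=.
by apply: eq_bigr => u _; ring.
Qed.

Lemma sum_deg_sqr_dev_ge0 (c : rat) : 0 <= \sum_u d u * (d u - c) ^+ 2.
Proof. by apply: sumr_ge0 => u _; rewrite mulr_ge0 ?ler0n ?sqr_ge0. Qed.

Lemma assort_den_ge0 : 0 <= assort_den e.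
Proof.
rewrite assort_denE; have [->|M1_neq0] := eqVneq (M 1) 0.
  by rewrite !(invr0, mulr0) expr0n subrr.
have -> : M 3 / M 1 - (M 2 / M 1) ^+ 2
          = (\sum_u d u * (d u - M 2 / M 1) ^+ 2) / M 1.
  by rewrite sum_deg_sqr_dev; field.
by rewrite divr_ge0 ?deg_moment_ge0 ?sum_deg_sqr_dev_ge0.
Qed.

End DegreeMoments.

Section LeafConnecting.
Variables (V : finType) (e : rel V) (mu : pendant e -> pendant e).

Local Notation d := (degQ e).
Local Notation D := (degQ (dagger mu)).
Local Notation M := (deg_moment e).

Lemma dagger_sym : symmetric e -> involutive mu -> symmetric (dagger mu).
Proof.
move=> e_sym mu_inv [u|p] [v|q] /=; [exact: (e_sym u v) | by [] | by [] |].
by apply/eqP/eqP => <-.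
Qed.

Lemma dagger_irr : irreflexive e -> (forall p, mu p != p) -> irreflexive (dagger mu).
Proof. by move=> e_irr mu_nofix [u|p] /=; [exact: e_irr | exact/negbTE]. Qed.

Lemma sum_pendant (k : V -> rat) :
  \sum_(p : pendant e) k (tag p) = \sum_u d u * k u.
Proof.
rewrite -(@sig_big_dep _ _ _ V (fun v => 'I_(deg e v)) xpredT (fun _ _ => true)
           (fun v _ => k v)) /=.
by apply: eq_bigr => u _; rewrite sumr_const card_ord mulr_natl.
Qed.

Lemma sum_pendant_at u (c : rat) : \sum_(p : pendant e | tag p == u) c = d u * c.
Proof.
rewrite big_mkcond /= (sum_pendant (fun w => if w == u then c else 0)).
by rewrite (bigD1 u) //= eqxx big1 ?addr0 // => w /negbTE ->; rewrite mulr0.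
Qed.

Lemma sum_dagger_nbr_inl u (h : (V + pendant e)%type -> rat) :
  \sum_(y | dagger mu (inl u) y) h y =
  \sum_(v | e u v) h (inl v) + \sum_(p | tag p == u) h (inr p).
Proof. exact: big_sumType. Qed.

Lemma sum_dagger_nbr_inr p (h : (V + pendant e)%type -> rat) :
  \sum_(y | dagger mu (inr p) y) h y = h (inl (tag p)) + h (inr (mu p)).
Proof.
rewrite big_sumType /=; congr (_ + _).
  by rewrite (big_pred1 (tag p)) // => v; rewrite eq_sym.
by rewrite (big_pred1 (mu p)) // => q; rewrite eq_sym.
Qed.

Lemma deg_dagger_inl u : D (inl u) = 2 * d u.
Proof.
by rewrite degQE sum_dagger_nbr_inl sum_pendant_at -degQE mulr1 mulr2n mulrDl !mul1r.
Qed.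

Lemma deg_dagger_inr p : D (inr p) = 2.
Proof. by rewrite degQE sum_dagger_nbr_inr. Qed.

Lemma deg_moment_dagger k :
  deg_moment (dagger mu) k = 2 ^+ k * M k + 2 ^+ k * M 1.
Proof.
rewrite /deg_moment big_sumType /= !mulr_sumr; congr (_ + _).
  by apply: eq_bigr => u _; rewrite deg_dagger_inl exprMn.
rewrite (eq_bigr (fun _ => 2 ^+ k)) => [|p _]; last by rewrite deg_dagger_inr.
rewrite (sum_pendant (fun _ => 2 ^+ k)).
by apply: eq_bigr => u _; rewrite expr1 mulrC.
Qed.

Lemma arc_sum_dagger :
  arc_sum (dagger mu) (fun x y => D x * D y) =
  4 * arc_sum e (fun u v => d u * d v) + 8 * M 2 + 4 * M 1.
Proof.
rewrite /arc_sum big_sumType /=.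
transitivity (\sum_u (4 * \sum_(v | e u v) d u * d v + 4 * d u ^+ 2)
              + \sum_u d u * (4 * d u + 4)).
  congr (_ + _).
    apply: eq_bigr => u _; rewrite sum_dagger_nbr_inl deg_dagger_inl mulr_sumr.
    congr (_ + _); first by apply: eq_bigr => v _; rewrite deg_dagger_inl; ring.
    rewrite (eq_bigr (fun _ => 2 * d u * 2)) => [|p _]; last by rewrite deg_dagger_inr.
    by rewrite sum_pendant_at; ring.
  rewrite -(sum_pendant (fun w => 4 * d w + 4)) /=.
  apply: eq_bigr => p _; rewrite sum_dagger_nbr_inr !deg_dagger_inr deg_dagger_inl.
  ring.
rewrite /deg_moment -big_split !mulr_sumr -!big_split /=.
by apply: eq_bigr => u _; ring.
Qed.

Hypotheses (e_sym : symmetric e) (e_irr : irreflexive e).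
Hypotheses (mu_inv : involutive mu) (mu_nofix : forall p, mu p != p).

Let dsym := dagger_sym e_sym mu_inv.
Let dirr := dagger_irr e_irr mu_nofix.

Lemma deg_moment1_dagger : deg_moment (dagger mu) 1 = 4 * M 1.
Proof. by rewrite deg_moment_dagger; ring. Qed.

Lemma assort_num_dagger : M 1 != 0 -> assort_num (dagger mu) = assort_num e.
Proof.
move=> M1_neq0; rewrite (assort_numE dsym dirr) (assort_numE e_sym e_irr).
by rewrite arc_sum_dagger deg_moment1_dagger deg_moment_dagger; field.
Qed.

Lemma assort_den_dagger :
  M 1 != 0 ->
  assort_den (dagger mu) = assort_den e + (\sum_u d u * (d u - 1) ^+ 2) / M 1.
Proof.
move=> M1_neq0; rewrite (assort_denE dsym dirr) (assort_denE e_sym e_irr).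
by rewrite sum_deg_sqr_dev deg_moment1_dagger !deg_moment_dagger; field.
Qed.

Lemma neutral_dagger : neutral e -> neutral (dagger mu).
Proof.
case=> m_gt0 [den_neq0 r0].
have M1_gt0 : 0 < M 1 by rewrite (handshake e_sym e_irr) mulr_gt0 ?ltr0n.
have M1_neq0 : M 1 != 0 by rewrite gt_eqF.
have den_gt0 : 0 < assort_den e by rewrite lt_def den_neq0 assort_den_ge0.
have dev_ge0 : 0 <= (\sum_u d u * (d u - 1) ^+ 2) / M 1.
  by rewrite divr_ge0 ?sum_deg_sqr_dev_ge0 ?ltW.
have num0 : assort_num e = 0.
  by move/eqP: r0; rewrite /assortativity mulf_eq0 invr_eq0 (negbTE den_neq0) orbF => /eqP.
split; last split.
- have : 0 < deg_moment (dagger mu) 1 by rewrite deg_moment1_dagger mulr_gt0.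
  by rewrite (handshake dsym dirr) pmulr_rgt0 // ltr0n.
- by rewrite assort_den_dagger // gt_eqF // ltr_wpDr.
- by rewrite /assortativity assort_num_dagger // num0 mul0r.
Qed.

End LeafConnecting.

Theorem lemma4 (V : finType) (e : rel V)
  (esym : symmetric e) (eirr : irreflexive e)
  (htree : is_tree e) (hn : (7 <= #|V|)%N) (hneutral : neutral e)
  (mu : pendant e -> pendant e)
  (mu_inv : forall p, mu (mu p) = p) (mu_nofix : forall p, mu p != p) :
  neutral (dagger mu).
Proof. exact: neutral_dagger esym eirr mu_inv mu_nofix hneutral. Qed.
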